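(* If a polynomial $p\in\mathbb C[X_{12},X_{13},X_{23}]$ satisfies $\hat H_1^{(-2)}p=\hat H_2^{(-2)}p=\hat H_3^{(-2)}p=0$, then $p$ is constant. That is, $\ker\hat H_1^{(-2)}\cap\ker\hat H_2^{(-2)}\cap\ker\hat H_3^{(-2)}=\mathbb C$ on $\mathbb C[X_{12},X_{13},X_{23}]$.
   Context: The operators (with rational coefficients, mapping polynomials to rational functions) are $$\hat H_1^{(-2)}=\frac{\partial^2}{\partial X_{12}^2}+\frac{\partial^2}{\partial X_{13}^2}+\frac{X_{12}^2+X_{13}^2-X_{23}^2}{X_{12}X_{13}}\frac{\partial^2}{\partial X_{12}\partial X_{13}}+\frac{2}{X_{12}}\frac{\partial}{\partial X_{12}}+\frac{2}{X_{13}}\frac{\partial}{\partial X_{13}},$$ $$\hat H_2^{(-2)}=\frac{\partial^2}{\partial X_{12}^2}+\frac{\partial^2}{\partial X_{23}^2}+\frac{X_{12}^2+X_{23}^2-X_{13}^2}{X_{12}X_{23}}\frac{\partial^2}{\partial X_{12}\partial X_{23}}+\frac{2}{X_{12}}\frac{\partial}{\partial X_{12}}+\frac{2}{X_{23}}\frac{\partial}{\partial X_{23}},$$ $$\hat H_3^{(-2)}=\frac{\partial^2}{\partial X_{13}^2}+\frac{\partial^2}{\partial X_{23}^2}+\frac{X_{13}^2+X_{23}^2-X_{12}^2}{X_{13}X_{23}}\frac{\partial^2}{\partial X_{13}\partial X_{23}}+\frac{2}{X_{13}}\frac{\partial}{\partial X_{13}}+\frac{2}{X_{23}}\frac{\partial}{\partial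 X_{23}}.$$ *)

From HB Require Import structures.
From mathcomp Require Import all_boot all_order all_algebra.
From mathcomp Require Import fraction.
From mathcomp Require Import mpoly.
Set Implicit Arguments. Unset Strict Implicit. Unset Printing Implicit Defensive.
Import Order.TTheory GRing.Theory Num.Theory.
Local Open Scope ring_scope.

(* Variables: index 0 = X12, index 1 = X13, index 2 = X23. *)
Notation tofrac := (@FracField.tofrac _).
Notation "x %:F" := (tofrac x) : ring_scope.

Section Ops.
Variable C : numClosedFieldType.
Notation P := {mpoly C[3]}.
Notation F := {fraction P}.

Definition i12 : 'I_3 := @Ordinal 3 0 isT.
Definition i13 : 'I_3 := @Ordinal 3 1 isT.
Definition i23 : 'I_3 := @Ordinal 3 2 isT.

Definition Hop (a b c : 'I_3) (p : P) : F :=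
  let Xa : F := ('X_a : P)%:F in
  let Xb : F := ('X_b : P)%:F in
  let Xc : F := ('X_c : P)%:F in
  (p^`M(a)^`M(a))%:F + (p^`M(b)^`M(b))%:F
  + (Xa ^+ 2 + Xb ^+ 2 - Xc ^+ 2) / (Xa * Xb) * (p^`M(a)^`M(b))%:F
  + 2%:R / Xa * (p^`M(a))%:F + 2%:R / Xb * (p^`M(b))%:F.

Definition H1 (p : P) : F := Hop i12 i13 i23 p.
Definition H2 (p : P) : F := Hop i12 i23 i13 p.
Definition H3 (p : P) : F := Hop i13 i23 i12 p.
End Ops.

(** Multiplying by X_a X_b turns H_a p = 0 into a polynomial identity, which
    on coefficients is a three-term recurrence (mcoeff_Hnum): in coordinates
    (i, j, k) adapted to the operator, the coefficient at (i, j, k) couples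
    p_(i+1, j-1, k), p_(i-1, j+1, k) and p_(i+1, j+1, k-2).  Let k be the top
    X23-degree of p.  The recurrences of H2 and H3 taken one layer higher leave
    a single surviving term, so every top-layer monomial is a pure power X23^k;
    a small elimination between the three recurrences kills the coefficient of
    X23^k when k > 0.  Descending on k, only the constant term survives. *)

From mathcomp Require Import all_boot all_order all_algebra.
From mathcomp Require Import fraction.
From mathcomp Require Import mpoly.
From mathcomp Require Import ring zify.
Import GRing.Theory Num.Theory.
Local Open Scope ring_scope.

Lemma natmul_eq0 (R : numDomainType) (x : R) n : (0 < n)%N -> x *+ n = 0 -> x = 0.
Proof. by rewrite lt0n => n0 /eqP; rewrite mulrn_eq0 (negbTE n0) => /eqP. Qed.

Lemma lincomb_eq0 {R : comNzRingType} {x y z w : R} :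
  x = 0 -> y = 0 -> z = 0 -> forall s t r, w = s * x + t * y + r * z -> w = 0.
Proof. by move=> -> -> -> s t r ->; rewrite !mulr0 !addr0. Qed.

Lemma mcoeffXM (R : nzRingType) (n : nat) (q : {mpoly R[n]}) m T :
  ('X_[m] * q)@_T = if (m <= T)%MM then q@_(T - m) else 0.
Proof.
rewrite -commr_mpolyX; case: ifP => mT; first by rewrite -{1}(submK mT) addmC mcoeffMX.
rewrite mcoeffM big1 // => k /eqP Tk; rewrite mcoeffX.
have [mk2|] := eqVneq m k.2; last by rewrite mulr0.
suff : (m <= T)%MM by rewrite mT.
by apply/mnm_lepP => l; rewrite (congr1 (fun t : 'X_{1..n} => t l) Tk) mnmDE mk2 leq_addl.
Qed.

Definition mnm3 (a b c : 'I_3) (i j k : nat) : 'X_{1..3} :=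
  (U_(a) *+ i + U_(b) *+ j + U_(c) *+ k)%MM.

Lemma mnm3_swap (a b c : 'I_3) i j k : mnm3 a c b i k j = mnm3 a b c i j k.
Proof. by apply/mnmP => l; rewrite !mnmDE; lia. Qed.

Lemma mnm3_rotate (a b c : 'I_3) i j k : mnm3 b c a j k i = mnm3 a b c i j k.
Proof. by apply/mnmP => l; rewrite !mnmDE; lia. Qed.

Lemma mnm3_000 (a b c : 'I_3) : mnm3 a b c 0 0 0 = 0%MM.
Proof. by apply/mnmP => l; rewrite !mnmDE !mulmnE !muln0. Qed.

Definition Hnum {R : nzRingType} (a b c : 'I_3) (p : {mpoly R[3]}) : {mpoly R[3]} :=
  'X_a * 'X_b * (p^`M(a)^`M(a) + p^`M(b)^`M(b))
  + ('X_a ^+ 2 + 'X_b ^+ 2 - 'X_c ^+ 2) * p^`M(a)^`M(b)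
  + ('X_b * p^`M(a) + 'X_a * p^`M(b)) *+ 2.

Section Frame.
Variables a b c : 'I_3.
Hypotheses (ab : a != b) (ac : a != c) (bc : b != c).
Local Notation m3 := (mnm3 a b c).

Lemma ord3_cover (l : 'I_3) : [|| l == a, l == b | l == c].
Proof.
move: ab ac bc.
by case: a => [[|[|[|?]]] ?]; case: b => [[|[|[|?]]] ?]; case: c => [[|[|[|?]]] ?];
  case: l => [[|[|[|?]]] ?].
Qed.

Lemma mnm3Ea i j k : m3 i j k a = i.
Proof.
rewrite !mnmDE !mulmnE !mnm1E eqxx (eq_sym b) (eq_sym c) (negbTE ab) (negbTE ac).
by rewrite /= mul1n !mul0n !addn0.
Qed.

Lemma mnm3Eb i j k : m3 i j k b = j.
Proof.
rewrite !mnmDE !mulmnE !mnm1E eqxx (negbTE ab) (eq_sym c) (negbTE bc).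
by rewrite /= mul1n !mul0n addn0.
Qed.

Lemma mnm3Ec i j k : m3 i j k c = k.
Proof. by rewrite !mnmDE !mulmnE !mnm1E eqxx (negbTE ac) (negbTE bc) /= mul1n !mul0n. Qed.

Lemma mnm3P (m : 'X_{1..3}) i j k : m a = i -> m b = j -> m c = k -> m = m3 i j k.
Proof.
move=> Ea Eb Ec; apply/mnmP => l.
by case/or3P: (ord3_cover l) => /eqP ->; rewrite ?mnm3Ea ?mnm3Eb ?mnm3Ec.
Qed.

Lemma mnm3_eta (m : 'X_{1..3}) : m = m3 (m a) (m b) (m c).
Proof. exact: mnm3P. Qed.

Lemma mnm3D i j k i' j' k' : (m3 i j k + m3 i' j' k')%MM = m3 (i + i') (j + j') (k + k').
Proof. by apply: mnm3P; rewrite mnmDE ?mnm3Ea ?mnm3Eb ?mnm3Ec. Qed.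

Lemma mnm3B i j k i' j' k' : (m3 i j k - m3 i' j' k')%MM = m3 (i - i') (j - j') (k - k').
Proof. by apply: mnm3P; rewrite mnmBE ?mnm3Ea ?mnm3Eb ?mnm3Ec. Qed.

Lemma lepm_mnm3 i j k i' j' k' :
  (m3 i j k <= m3 i' j' k')%MM = [&& i <= i', j <= j' & k <= k']%N.
Proof.
apply/mnm_lepP/and3P => [le | [le_i le_j le_k] l].
  by move: (le a) (le b) (le c); rewrite !mnm3Ea !mnm3Eb !mnm3Ec => -> -> ->.
by case/or3P: (ord3_cover l) => /eqP ->; rewrite ?mnm3Ea ?mnm3Eb ?mnm3Ec.
Qed.

Lemma mnm3_Ua : U_(a)%MM = m3 1 0 0.
Proof. by apply: mnm3P; rewrite mnm1E ?eqxx ?(negbTE ab) ?(negbTE ac). Qed.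

Lemma mnm3_Ub : U_(b)%MM = m3 0 1 0.
Proof.
by apply: mnm3P; rewrite mnm1E;
  [rewrite eq_sym (negbTE ab) | rewrite eqxx | rewrite (negbTE bc)].
Qed.

Lemma mnm3_Uc : U_(c)%MM = m3 0 0 1.
Proof.
by apply: mnm3P; rewrite mnm1E;
  [rewrite eq_sym (negbTE ac) | rewrite eq_sym (negbTE bc) | rewrite eqxx].
Qed.

Variable R : comNzRingType.
Implicit Type q : {mpoly R[3]}.

Lemma mcoeffXM_mnm3 q i j k i' j' k' :
  ('X_[m3 i' j' k'] * q)@_(m3 i j k) =
  if [&& i' <= i, j' <= j & k' <= k]%N then q@_(m3 (i - i') (j - j') (k - k')) else 0.
Proof. by rewrite mcoeffXM lepm_mnm3 mnm3B. Qed.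

Lemma mcoeff_mderiv_a q i j k : (q^`M(a))@_(m3 i j k) = q@_(m3 i.+1 j k) *+ i.+1.
Proof. by rewrite mcoeff_mderiv mnm3Ea mnm3_Ua mnm3D addn1 !addn0. Qed.

Lemma mcoeff_mderiv_b q i j k : (q^`M(b))@_(m3 i j k) = q@_(m3 i j.+1 k) *+ j.+1.
Proof. by rewrite mcoeff_mderiv mnm3Eb mnm3_Ub mnm3D addn1 !addn0. Qed.

Lemma mcoeff_Hnum q i j k :
  (Hnum a b c q)@_(m3 i j k) =
    (if (0 < j)%N then q@_(m3 i.+1 j.-1 k) *+ (i.+1 * (i + j).+1) else 0)
  + (if (0 < i)%N then q@_(m3 i.-1 j.+1 k) *+ (j.+1 * (i + j).+1) else 0)
  - (if (1 < k)%N then q@_(m3 i.+1 j.+1 k.-2) *+ (i.+1 * j.+1) else 0).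
Proof.
rewrite /Hnum mnm3_Ua mnm3_Ub mnm3_Uc !expr2 -!mpolyXD !mnm3D /=.
rewrite !(mulrDl, mulrDr, mulrBl, mulNr, mcoeffD, mcoeffB, mcoeffN, mcoeffMn, mcoeffXM_mnm3).
rewrite !(mcoeff_mderiv_a, mcoeff_mderiv_b).
(* Opaque atoms make the 27 calls to ring below fast. *)
have [Q QE] : exists Q : nat -> nat -> nat -> R, forall u v w, q@_(m3 u v w) = Q u v w.
  by exists (fun u v w => q@_(m3 u v w)).
rewrite !QE.
by case: i => [|[|i]]; case: j => [|[|j]]; case: k => [|[|k]];
  rewrite /= ?(subn0, subSS, addn0, add0n, addSn, addnS); ring.
Qed.

End Frame.

Lemma tofrac_mpolyX_neq0 (C : numClosedFieldType) (l : 'I_3) :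
  ('X_l : {mpoly C[3]})%:F != 0.
Proof. by rewrite tofrac_eq0 -msupp_eq0 msuppX. Qed.

Lemma Hop_mulX (C : numClosedFieldType) (a b c : 'I_3) (p : {mpoly C[3]}) :
  Hop a b c p * ('X_a * 'X_b)%:F = (Hnum a b c p)%:F.
Proof.
have clear_denominators (F : fieldType) (xa xb xc paa pbb pab pa pb : F) :
    xa != 0 -> xb != 0 ->
    (paa + pbb + (xa ^+ 2 + xb ^+ 2 - xc ^+ 2) / (xa * xb) * pab
     + 2%:R / xa * pa + 2%:R / xb * pb) * (xa * xb)
    = xa * xb * (paa + pbb) + (xa ^+ 2 + xb ^+ 2 - xc ^+ 2) * pab
      + (xb * pa + xa * pb) *+ 2.
  by move=> xa0 xb0; field; rewrite xa0 xb0.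
rewrite /Hop /Hnum !(tofracMn, tofracXn, tofracD, tofracN, tofracM).
exact: clear_denominators (tofrac_mpolyX_neq0 C a) (tofrac_mpolyX_neq0 C b).
Qed.

Lemma Hnum_eq0 {C : numClosedFieldType} {a b c : 'I_3} {p : {mpoly C[3]}} :
  Hop a b c p = 0 -> Hnum a b c p = 0.
Proof. by move=> Hp0; apply/eqP; rewrite -tofrac_eq0 -Hop_mulX Hp0 mul0r. Qed.

Section Kernel.
Variables (C : numClosedFieldType) (p : {mpoly C[3]}).
Hypotheses (H1p : H1 p = 0) (H2p : H2 p = 0) (H3p : H3 p = 0).
Local Notation P i j k := (p@_(mnm3 i12 i13 i23 i j k)).

Lemma coeff_recurrence12 i j k :
    (if (0 < j)%N then P i.+1 j.-1 k *+ (i.+1 * (i + j).+1) else 0)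
  + (if (0 < i)%N then P i.-1 j.+1 k *+ (j.+1 * (i + j).+1) else 0)
  - (if (1 < k)%N then P i.+1 j.+1 k.-2 *+ (i.+1 * j.+1) else 0) = 0.
Proof.
have := @mcoeff_Hnum i12 i13 i23 isT isT isT _ p i j k.
by rewrite (Hnum_eq0 H1p) mcoeff0.
Qed.

Lemma coeff_recurrence13 i j k :
    (if (0 < k)%N then P i.+1 j k.-1 *+ (i.+1 * (i + k).+1) else 0)
  + (if (0 < i)%N then P i.-1 j k.+1 *+ (k.+1 * (i + k).+1) else 0)
  - (if (1 < j)%N then P i.+1 j.-2 k.+1 *+ (i.+1 * k.+1) else 0) = 0.
Proof.
have := @mcoeff_Hnum i12 i23 i13 isT isT isT _ p i k j.
by rewrite (Hnum_eq0 H2p) mcoeff0 !(mnm3_swap i12 i13 i23).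
Qed.

Lemma coeff_recurrence23 i j k :
    (if (0 < k)%N then P i j.+1 k.-1 *+ (j.+1 * (j + k).+1) else 0)
  + (if (0 < j)%N then P i j.-1 k.+1 *+ (k.+1 * (j + k).+1) else 0)
  - (if (1 < i)%N then P i.-2 j.+1 k.+1 *+ (j.+1 * k.+1) else 0) = 0.
Proof.
have := @mcoeff_Hnum i13 i23 i12 isT isT isT _ p j k i.
by rewrite (Hnum_eq0 H3p) mcoeff0 !(mnm3_rotate i12 i13 i23).
Qed.

Lemma coeff_X23_power k : P 0 0 k.+1 = 0.
Proof.
case: k => [|[|[|k]]].
- have := coeff_recurrence23 0 1 0 => /= e.
  by apply: (@natmul_eq0 _ _ 2) => //; rewrite -e; ring.
- have := coeff_recurrence12 1 1 0; have := coeff_recurrence13 1 0 1.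
  have := coeff_recurrence23 0 1 1 => /= e23 e13 e12.
  apply: (@natmul_eq0 _ _ 12) => //.
  by apply: (lincomb_eq0 e12 e13 e23 (-1) 1 1); ring.
- have := coeff_recurrence23 0 1 2; have := coeff_recurrence12 1 1 1.
  have := coeff_recurrence13 1 2 0 => /= e13 e12 e23.
  apply: (@natmul_eq0 _ _ 36) => //.
  by apply: (lincomb_eq0 e13 e12 e23 (-6) (-2) 3); ring.
have := coeff_recurrence23 0 1 k.+3; have := coeff_recurrence12 1 1 k.+2.
have := coeff_recurrence13 1 2 k.+1; have := coeff_recurrence23 2 1 k.+1.
move=> /= e23 e13 e12 e23'.
have P20E : P 2 0 k.+2 = P 0 2 k.+2.
  apply: subr0_eq; apply: (@natmul_eq0 _ _ (k.+2 * k.+4.+1)) => //.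
  by apply: (lincomb_eq0 e23 e13 e12 1 (-1) 0); ring.
rewrite P20E in e12 e13.
have P22E : P 2 2 k = P 0 2 k.+2 *+ 3.
  apply: subr0_eq; apply: (@natmul_eq0 _ _ 4) => //.
  by rewrite -oppr0 -e12; ring.
rewrite P22E in e13.
have P02E : P 0 2 k.+2 = 0.
  by apply: (@natmul_eq0 _ _ (k.+4 * k.+4.+1)) => //; rewrite -e13; ring.
rewrite P02E in e23'.
by apply: (@natmul_eq0 _ _ (k.+4 * k.+4.+1)) => //; rewrite -e23'; ring.
Qed.

Lemma top_layer_support {i j k} :
    (forall i' j' k', (k < k')%N -> P i' j' k' = 0) ->
  P i j k != 0 -> i = 0%N /\ j = 0%N.
Proof.
move=> above; case: i => [|i] Pijk.
  case: j Pijk => [//|j] /negP[]; apply/eqP.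
  have := coeff_recurrence23 0 j k.+1.
  rewrite !(above _ _ k.+2) // !mul0rn !if_same addr0 subr0 /=.
  exact: natmul_eq0.
case/negP: Pijk; apply/eqP.
have := coeff_recurrence13 i j k.+1.
rewrite !(above _ _ k.+2) // !mul0rn !if_same addr0 subr0 /=.
exact: natmul_eq0.
Qed.

Lemma coeff_eq0_above0 {k} :
    (forall i j k', (k < k')%N -> P i j k' = 0) ->
  forall i j k', (0 < k')%N -> P i j k' = 0.
Proof.
elim: k => [//|k IH] above; apply: IH => i j k'.
rewrite leq_eqVlt => /orP[/eqP <-|]; last exact: above.
apply/eqP/negPn/negP => Pijk.
have [i0 j0] := top_layer_support above Pijk.
by rewrite i0 j0 coeff_X23_power eqxx in Pijk.
Qed.

Lemma coeff_nonconst_eq0 (m : 'X_{1..3}) : m != 0%MM -> p@_m = 0.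
Proof.
have above i j k : (\max_(m <- msupp p) m i23 < k)%N -> P i j k = 0.
  move=> lt_max; apply/eqP/negPn/negP => Pijk.
  have := @leq_bigmax_seq _ (msupp p) xpredT (fun m : 'X_{1..3} => m i23)
    (mnm3 i12 i13 i23 i j k).
  by rewrite mcoeff_msupp Pijk mnm3Ec // leqNgt lt_max => /(_ isT isT).
move=> m0; have [i [j [k mE]]] : exists i j k, m = mnm3 i12 i13 i23 i j k.
  by exists (m i12), (m i13), (m i23); apply: mnm3_eta.
subst m; case: k m0 => [|k] m0; last exact: (coeff_eq0_above0 above).
apply/eqP/negPn/negP => Pij0.
have [i0 j0] := top_layer_support (coeff_eq0_above0 above) Pij0.
by rewrite i0 j0 mnm3_000 eqxx in m0.
Qed.

End Kernel.

Theorem mainTheorem8 (C : numClosedFieldType) (p : {mpoly C[3]}) :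
  H1 p = 0 -> H2 p = 0 -> H3 p = 0 -> exists c : C, p = c%:MP.
Proof.
move=> H1p H2p H3p; exists p@_0; apply/mpolyP => m; rewrite mcoeffC.
have [->|m0] := eqVneq m 0%MM; first by rewrite mulr1.
by rewrite mulr0 (coeff_nonconst_eq0 _ _ H1p H2p H3p _ m0).
Qed.
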